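(* Let $1\le q\le p\le\infty$, $E$ a Banach space, $Y$ a Banach lattice and $T:E\to Y$ a bounded linear operator. Then $T$ is positive $(p,q)$-majorizing if and only if $T$ is positive strongly $(p,q)$-summing.
   Context: $p^{\ast},q^{\ast}$ denote conjugate exponents. For a finite family $(y_i^{\ast})$ in $Y^{\ast}$, $\|(y_i^{\ast})\|_{p^{\ast},\omega}=\sup_{y\in B_{Y}}\|(\langle y_i^{\ast},y\rangle)_i\|_{p^{\ast}}$. $T$ is positive $(p,q)$-majorizing if there is $C>0$ such that $(\sum_{i=1}^n|\langle T(z_i),y_i^{\ast}\rangle|^{q^{\ast}})^{1/q^{\ast}}\le C\|(y_i^{\ast})_{i=1}^n\|_{p^{\ast},\omega}$ for all $n$, all $z_1,\dots,z_n\in B_E$ and all positive $y_1^{\ast},\dots,y_n^{\ast}\in Y^{\ast}$. $T$ is positive strongly $(p,q)$-summing if there is $C>0$ with $\sum_{i=1}^n|\langle T(x_i),y_i^{\ast}\rangle|\le C(\sum_i\|x_i\|^q)^{1/q}\|(y_i^{\ast})_{i=1}^n\|_{p^{\ast},\omega}$ for all $n$, all $x_i\in E$ and all positive $y_i^{\ast}\in Y^{\ast}$. *)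

From HB Require Import structures.
From mathcomp Require Import all_boot all_order all_algebra.
From mathcomp Require Import all_classical all_reals all_analysis.
Set Implicit Arguments. Unset Strict Implicit. Unset Printing Implicit Defensive.
Import Order.TTheory GRing.Theory Num.Theory.
Import numFieldNormedType.Exports.
Local Open Scope classical_set_scope.
Local Open Scope ring_scope.

Section Defs.
Variable R : realType.

Definition is_linear (U V : lmodType R) (f : U -> V) : Prop :=
  forall (a : R) (x y : U), f (a *: x + y) = a *: f x + f y.

Definition bounded_linear (U V : normedModType R) (f : U -> V) : Prop :=
  is_linear f /\ continuous f.

Definition lat_abs (Y : normedModType R) (join : Y -> Y -> Y) (x : Y) : Y :=
  join x (- x).

Definition is_banach_lattice (Y : completeNormedModType R)
    (le : Y -> Y -> Prop) (join : Y -> Y -> Y) : Prop :=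
  (forall x, le x x) /\
  (forall x y, le x y -> le y x -> x = y) /\
  (forall x y z, le x y -> le y z -> le x z) /\
  (forall x y z, le x y -> le (x + z) (y + z)) /\
  (forall (a : R) x y, 0 <= a -> le x y -> le (a *: x) (a *: y)) /\
  (forall x y, le x (join x y) /\ le y (join x y)
               /\ forall z, le x z -> le y z -> le (join x y) z) /\
  (forall x y, le (lat_abs join x) (lat_abs join y) -> `|x| <= `|y|).

Definition is_dual (Y : normedModType R) (f : Y -> R) : Prop :=
  is_linear (f : Y -> R^o) /\ continuous f.

Definition is_pos_dual (Y : normedModType R) (le : Y -> Y -> Prop)
    (f : Y -> R) : Prop :=
  is_dual f /\ forall y, le 0 y -> 0 <= f y.

Definition conj_exp (p : \bar R) : \bar R :=
  match p with
  | r%:E => if r == 1 then +oo%E else (r / (r - 1))%:E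
  | +oo%E => 1%E
  | -oo%E => -oo%E
  end.

Definition lnorm_fin (r : \bar R) (n : nat) (a : 'I_n -> R) : R :=
  match r with
  | s%:E => (\sum_(i < n) `|a i| `^ s) `^ s^-1
  | +oo%E => \big[Num.max/0]_(i < n) `|a i|
  | -oo%E => 0
  end.

Definition weak_norm (Y : normedModType R) (r : \bar R) (n : nat)
    (ys : 'I_n -> Y -> R) : \bar R :=
  ereal_sup [set (lnorm_fin r (fun i => ys i y))%:E | y in [set y : Y | `|y| <= 1]].

Definition pos_majorizing (E : normedModType R) (Y : normedModType R)
    (le : Y -> Y -> Prop) (p q : \bar R) (T : E -> Y) : Prop :=
  exists C : R, 0 < C /\
    forall (n : nat) (z : 'I_n -> E) (ys : 'I_n -> Y -> R),
      (forall i, `|z i| <= 1) -> (forall i, is_pos_dual le (ys i)) ->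
      ((lnorm_fin (conj_exp q) (fun i => ys i (T (z i))))%:E
        <= C%:E * weak_norm (conj_exp p) ys)%E.

Definition pos_strongly_summing (E : normedModType R) (Y : normedModType R)
    (le : Y -> Y -> Prop) (p q : \bar R) (T : E -> Y) : Prop :=
  exists C : R, 0 < C /\
    forall (n : nat) (x : 'I_n -> E) (ys : 'I_n -> Y -> R),
      (forall i, is_pos_dual le (ys i)) ->
      ((\sum_(i < n) `|ys i (T (x i))|)%:E
        <= (C * lnorm_fin q (fun i => `|x i|))%:E * weak_norm (conj_exp p) ys)%E.

End Defs.

From HB Require Import structures.
From mathcomp Require Import all_boot all_order all_algebra.
From mathcomp Require Import all_classical all_reals all_analysis.
From mathcomp Require Import ring.
Set Implicit Arguments.
Unset Strict Implicit.
Unset Printing Implicit Defensive.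
Import Order.TTheory GRing.Theory Num.Theory.
Import numFieldNormedType.Exports.
Local Open Scope ring_scope.

(* Write x_i = |x_i| z_i with |z_i| <= 1.  By linearity,
   sum_i |<T x_i, y_i>| = sum_i |x_i| |<T z_i, y_i>|, and the supremum of the
   right-hand side over the families (|x_i|) in the unit ball of l_q is the
   l_q*-norm of (<T z_i, y_i>), by Hoelder's inequality and its equality case.
   Multiplying the majorizing estimate for the z_i by ||(|x_i|)||_q therefore
   gives the strongly summing estimate, and choosing x_i = a_i z_i with an
   extremal family (a_i) gives the converse. *)

Lemma invr_powR (R : realType) (a s : R) : 0 <= a -> a^-1 `^ s = (a `^ s)^-1.
Proof. by move=> a0; rewrite -powR_inv1 // powRAC powR_inv1 ?powR_ge0. Qed.

Section finite_lnorm.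
Variable R : realType.
Implicit Types (s : R) (n : nat).

Lemma lnorm_fin_ge0 (q : \bar R) n (a : 'I_n -> R) : 0 <= lnorm_fin q a.
Proof. by case: q => [s||] //=; [exact: powR_ge0 | exact: bigmax_ge_id]. Qed.

Lemma lnorm_fin1 n (a : 'I_n -> R) : lnorm_fin 1%:E a = \sum_i `|a i|.
Proof.
rewrite /= invr1 powRr1; last by apply: sumr_ge0 => i _; exact: powR_ge0.
by apply: eq_bigr => i _; rewrite powRr1.
Qed.

Lemma ler_lnorm_finy n (a : 'I_n -> R) i : `|a i| <= lnorm_fin +oo%E a.
Proof. exact: le_bigmax. Qed.

Lemma lnorm_fin_le (q : \bar R) n (a b : 'I_n -> R) : (0 <= q)%E ->
  (forall i, `|b i| <= `|a i|) -> lnorm_fin q b <= lnorm_fin q a.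
Proof.
case: q => [s||] q0 ba /=; last exact: lexx.
  rewrite lee_fin in q0; apply: ge0_ler_powR; rewrite ?invr_ge0 ?nnegrE ?sumr_ge0 //.
  by apply: ler_sum => i _; apply: ge0_ler_powR; rewrite ?nnegrE.
apply: bigmax_le => [|i _]; first exact: bigmax_ge_id.
exact: le_trans (ba i) (le_bigmax _ _ _).
Qed.

Lemma powR_lnorm_fin s n (a : 'I_n -> R) : s != 0 ->
  lnorm_fin s%:E a `^ s = \sum_i `|a i| `^ s.
Proof.
move=> s0; rewrite /= -powRrM mulVf // powRr1 //.
by apply: sumr_ge0 => i _; exact: powR_ge0.
Qed.

Lemma lnorm_fin_eq0 s n (a : 'I_n -> R) : s != 0 ->
  lnorm_fin s%:E a = 0 -> forall i, a i = 0.
Proof.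
move=> s0 a0 i; apply/normr0_eq0/(@powR_eq0_eq0 _ _ s).
move/eqP: (powR_lnorm_fin a s0); rewrite a0 powR0 // eq_sym psumr_eq0 => [|j _].
  by move=> /allP/(_ i (mem_index_enum _))/eqP.
exact: powR_ge0.
Qed.

Lemma sum_powR_div_lnorm_fin s n (a : 'I_n -> R) : s != 0 ->
  0 < lnorm_fin s%:E a -> \sum_i (`|a i| / lnorm_fin s%:E a) `^ s = 1.
Proof.
move=> s0 N0; set N := lnorm_fin _ _.
under eq_bigr do rewrite powRM ?invr_ge0 ?(ltW N0) // invr_powR ?(ltW N0) //.
by rewrite -mulr_suml -powR_lnorm_fin // mulfV // gt_eqF // powR_gt0.
Qed.

End finite_lnorm.

Section holder.
Variables (R : realType) (s r : R).
Hypotheses (s_gt0 : 0 < s) (r_gt0 : 0 < r) (conj_sr : s^-1 + r^-1 = 1).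

Lemma young_scaled (x y u v : R) : 0 <= x -> 0 <= y -> 0 < u -> 0 < v ->
  x * y <= u * v * ((x / u) `^ s / s + (y / v) `^ r / r).
Proof.
move=> x0 y0 u0 v0.
have -> : x * y = u * v * ((x / u) * (y / v)).
  by rewrite mulrACA (mulrC u) (mulrC v) !divfK ?gt_eqF.
apply: ler_wpM2l; first by rewrite mulr_ge0 ?ltW.
exact: conjugate_powR (divr_ge0 x0 (ltW u0)) (divr_ge0 y0 (ltW v0)) s_gt0 r_gt0 conj_sr.
Qed.

Lemma holder_lnorm_fin n (b t : 'I_n -> R) :
  \sum_i `|b i| * `|t i| <= lnorm_fin s%:E b * lnorm_fin r%:E t.
Proof.
have := lnorm_fin_ge0 s%:E b; rewrite le_eqVlt => /predU1P[/esym A0|A_gt0].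
  rewrite big1 ?mulr_ge0 ?lnorm_fin_ge0 // => i _.
  by rewrite (lnorm_fin_eq0 (lt0r_neq0 s_gt0) A0) normr0 mul0r.
have := lnorm_fin_ge0 r%:E t; rewrite le_eqVlt => /predU1P[/esym B0|B_gt0].
  rewrite big1 ?mulr_ge0 ?lnorm_fin_ge0 // => i _.
  by rewrite (lnorm_fin_eq0 (lt0r_neq0 r_gt0) B0) normr0 mulr0.
have := sum_powR_div_lnorm_fin (lt0r_neq0 s_gt0) A_gt0.
have := sum_powR_div_lnorm_fin (lt0r_neq0 r_gt0) B_gt0.
move: (lnorm_fin s%:E b) (lnorm_fin r%:E t) A_gt0 B_gt0 => A B A_gt0 B_gt0 sB sA.
apply: (@le_trans _ _ (A * B * \sum_i ((`|b i| / A) `^ s / s + (`|t i| / B) `^ r / r))).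
  by rewrite mulr_sumr; apply: ler_sum => i _; apply: young_scaled.
by rewrite big_split /= -!mulr_suml sA sB !mul1r conj_sr mulr1.
Qed.

Lemma lnorm_fin_dual n (t : 'I_n -> R) : exists a : 'I_n -> R,
  lnorm_fin s%:E a <= 1 /\ lnorm_fin r%:E t <= \sum_i `|a i| * `|t i|.
Proof.
have := lnorm_fin_ge0 r%:E t; rewrite le_eqVlt => /predU1P[<-|N_gt0].
  exists (fun=> 0); split; last by rewrite sumr_ge0 // => i _; rewrite normr0 mul0r.
  rewrite /= big1 => [|i _]; last by rewrite normr0 powR0 ?gt_eqF.
  by rewrite powR0 ?invr_eq0 ?gt_eqF.
have rsE : (r - 1) * s = r.
  have rs : r * s = r + s.
    by rewrite -[LHS]mulr1 -conj_sr mulrDr mulfK ?gt_eqF // mulrAC mulfV ?gt_eqF // mul1r.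
  by rewrite mulrBl mul1r rs addrK.
have := sum_powR_div_lnorm_fin (lt0r_neq0 r_gt0) N_gt0.
move: (lnorm_fin r%:E t) N_gt0 => N N_gt0 sN.
(* the equality case of Hoelder's inequality *)
exists (fun i => (`|t i| / N) `^ (r - 1)); split.
  rewrite /=; under eq_bigr do rewrite ger0_norm ?powR_ge0 // -powRrM rsE.
  by rewrite sN powR1.
have scaleN x : 0 <= x -> N * (x / N) `^ r = (x / N) `^ (r - 1) * x.
  move=> x0; rewrite -(mulr_powRB1 (divr_ge0 x0 (ltW N_gt0)) r_gt0).
  by rewrite mulrA mulrC (mulrC N) divfK ?gt_eqF.
suff -> : \sum_i `|(`|t i| / N) `^ (r - 1)| * `|t i| = N by [].
rewrite -[RHS]mulr1 -[X in _ = _ * X]sN mulr_sumr; apply: eq_bigr => i _.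
by rewrite (ger0_norm (powR_ge0 _ _)) scaleN.
Qed.

End holder.

Section conj_exp_theory.
Variable R : realType.

Lemma conj_expE (s : R) : 1 < s -> conj_exp s%:E = (s / (s - 1))%:E.
Proof. by move=> s1; rewrite /conj_exp gt_eqF. Qed.

Lemma conj_exp_inv (s : R) : 1 < s -> s^-1 + (s / (s - 1))^-1 = 1.
Proof.
move=> s1; have s0 : s != 0 by rewrite gt_eqF // (lt_trans ltr01).
have s10 : s - 1 != 0 by rewrite subr_eq0 gt_eqF.
by field; rewrite s10 s0.
Qed.

Lemma conj_exp_gt0 (s : R) : 1 < s -> 0 < s / (s - 1).
Proof. by move=> s1; rewrite divr_gt0 ?subr_gt0 // (lt_trans ltr01). Qed.

Lemma holder_lnorm_fin_conj_exp (q : \bar R) n (b t : 'I_n -> R) : (1 <= q)%E ->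
  \sum_i `|b i| * `|t i| <= lnorm_fin q b * lnorm_fin (conj_exp q) t.
Proof.
case: q => [s||]; last by rewrite leeNy_eq.
- rewrite lee_fin le_eqVlt => /predU1P[<-|s1].
    rewrite lnorm_fin1 /conj_exp eqxx mulr_suml; apply: ler_sum => i _.
    by apply: ler_wpM2l => //; exact: ler_lnorm_finy.
  rewrite conj_expE //.
  exact (holder_lnorm_fin (lt_trans ltr01 s1) (conj_exp_gt0 s1) (conj_exp_inv s1) b t).
- move=> _; rewrite /conj_exp lnorm_fin1 mulr_sumr; apply: ler_sum => i _.
  by apply: ler_wpM2r => //; exact: ler_lnorm_finy.
Qed.

Lemma lnorm_fin_conj_exp_dual (q : \bar R) n (t : 'I_n -> R) : (1 <= q)%E ->
  exists a : 'I_n -> R,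
    lnorm_fin q a <= 1 /\ lnorm_fin (conj_exp q) t <= \sum_i `|a i| * `|t i|.
Proof.
case: q => [s||]; last by rewrite leeNy_eq.
- rewrite lee_fin le_eqVlt => /predU1P[<-|s1]; last first.
    rewrite conj_expE //.
    exact (lnorm_fin_dual (lt_trans ltr01 s1) (conj_exp_gt0 s1) (conj_exp_inv s1) t).
  rewrite /conj_exp eqxx; case: n t => [|n] t.
    by exists (fun=> 0); rewrite lnorm_fin1 /= !big_ord0 ler01.
  have [k _ tk] := @eq_bigmax _ _ _ 0 ord0 xpredT (fun i => `|t i|) isT
    (fun i _ => normr_ge0 (t i)).
  exists (fun i => (i == k)%:R); rewrite lnorm_fin1 /= tk; split.
    rewrite (bigD1 k isT) big1 => [|i /andP[_ /negbTE ->]]; last exact: normr0.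
    by rewrite eqxx normr1 Monoid.mulm1.
  rewrite (bigD1 k isT) big1 => [|i /andP[_ /negbTE ->]]; last by rewrite normr0 mul0r.
  by rewrite eqxx normr1 mul1r Monoid.mulm1.
- move=> _; exists (fun=> 1); rewrite lnorm_fin1 /conj_exp.
  split; first by apply: bigmax_le => [|i _]; rewrite ?normr1 ?ler01.
  by under [leRHS]eq_bigr do rewrite normr1 mul1r.
Qed.

End conj_exp_theory.

Lemma is_linearZ (R : realType) (U V : lmodType R) (f : U -> V) :
  is_linear f -> forall a x, f (a *: x) = a *: f x.
Proof.
move=> f_lin a x; have f0 : f 0 = 0.
  by apply: (addrI (f 0)); rewrite addr0 -{1}(scale1r (f 0)) -f_lin scale1r addr0.
by rewrite -[a *: x]addr0 f_lin f0 addr0.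
Qed.

Section normalize.
Variables (R : realType) (V : normedModType R).

Lemma normr_normalize_le1 (x : V) : `| `|x|^-1 *: x | <= 1.
Proof.
rewrite normrZ normfV normr_id; have [->|x0] := eqVneq `|x| 0.
  by rewrite invr0 mul0r ler01.
by rewrite mulVf.
Qed.

Lemma scale_normr_normalize (x : V) : `|x| *: (`|x|^-1 *: x) = x.
Proof.
rewrite scalerA; have [x0|x0] := eqVneq `|x| 0.
  by rewrite x0 mul0r scale0r; apply/esym/eqP; rewrite -normr_eq0 x0.
by rewrite mulfV // scale1r.
Qed.

End normalize.

Lemma weak_norm_ge0 (R : realType) (Y : normedModType R) (r : \bar R) n
  (ys : 'I_n -> Y -> R) : (0 <= weak_norm r ys)%E.
Proof.
apply: le_trans (_ : (lnorm_fin r (fun i => ys i 0))%:E <= _)%E.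
  by rewrite lee_fin lnorm_fin_ge0.
by apply: ereal_sup_ubound; exists 0; rewrite //= normr0 ler01.
Qed.

Section operators.
Variables (R : realType) (E Y : normedModType R).
Variables (le : Y -> Y -> Prop) (p q : \bar R) (T : E -> Y).
Hypotheses (q_ge1 : (1 <= q)%E) (T_lin : is_linear T).

Lemma sum_dual_scale n (ys : 'I_n -> Y -> R) (c : 'I_n -> R) (z : 'I_n -> E) :
  (forall i, is_dual (ys i)) ->
  \sum_i `|ys i (T (c i *: z i))| = \sum_i `|c i| * `|ys i (T (z i))|.
Proof.
move=> ys_dual; apply: eq_bigr => i _.
have [ys_lin _] := ys_dual i.
by rewrite is_linearZ // (is_linearZ ys_lin) normrM.
Qed.

Lemma pos_majorizing_strongly_summing :
  pos_majorizing le p q T -> pos_strongly_summing le p q T.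
Proof.
move=> [C [C_gt0 majC]]; exists C; split => // n x ys ys_pos.
pose z i := `|x i|^-1 *: x i; pose t i := ys i (T (z i)).
have -> : \sum_i `|ys i (T (x i))| = \sum_i `| `|x i| | * `|t i|.
  rewrite -sum_dual_scale => [|i]; last exact: (ys_pos i).1.
  by apply: eq_bigr => i _; rewrite scale_normr_normalize.
apply: le_trans (_ : (lnorm_fin q (fun i => `|x i|))%:E
                      * (lnorm_fin (conj_exp q) t)%:E <= _)%E.
  by rewrite -EFinM lee_fin holder_lnorm_fin_conj_exp.
rewrite EFinM (muleC C%:E) -muleA lee_wpmul2l ?lee_fin ?lnorm_fin_ge0 //.
exact: majC (fun i => normr_normalize_le1 (x i)) ys_pos.
Qed.

Lemma pos_strongly_summing_majorizing :
  pos_strongly_summing le p q T -> pos_majorizing le p q T.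
Proof.
move=> [C [C_gt0 sumC]]; exists C; split => // n z ys z_le1 ys_pos.
pose t i := ys i (T (z i)).
have [a [a_le1 dual_a]] := lnorm_fin_conj_exp_dual t q_ge1.
have := sumC n (fun i => a i *: z i) ys ys_pos.
rewrite sum_dual_scale => [sum_le|i]; last exact: (ys_pos i).1.
apply: le_trans (_ : (\sum_i `|a i| * `|t i|)%:E <= _)%E; first by rewrite lee_fin.
apply: le_trans sum_le _; apply: lee_wpmul2r; first exact: weak_norm_ge0.
rewrite lee_fin ler_piMr ?(ltW C_gt0) //.
apply: le_trans a_le1; apply: lnorm_fin_le => [|i]; first exact: le_trans q_ge1.
by rewrite normr_id normrZ ler_piMr.
Qed.

End operators.

Theorem theorem3p5 (R : realType) (p q : \bar R)
    (E : completeNormedModType R) (Y : completeNormedModType R)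
    (le : Y -> Y -> Prop) (join : Y -> Y -> Y) (T : E -> Y) :
  (1 <= q)%E -> (q <= p)%E ->
  is_banach_lattice le join ->
  bounded_linear T ->
  pos_majorizing le p q T <-> pos_strongly_summing le p q T.
Proof.
move=> q_ge1 _ _ [T_lin _]; split.
  exact: pos_majorizing_strongly_summing.
exact: pos_strongly_summing_majorizing.
Qed.
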